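(* Let $V$ be a finite set with $|V| = n$, where $n$ is prime, and let $c: V \rightarrow V$ be a cyclic permutation of $V$ (a single $n$-cycle). Then the set of nonconstant colorings $\chi: V \rightarrow \mathbb{P}$ is the disjoint union $$\biguplus_{\pi\in \mathfrak{S}_V} A(\pi, \mathrm{Des}(\pi c \pi^{-1})).$$
   Context: $\mathbb{P} = \{1,2,\ldots\}$. $\mathfrak{S}_V$ denotes the set of bijections $\pi: V \rightarrow [n]$. For $\pi \in \mathfrak{S}_V$ and $S \subseteq [n-1]$, $A(\pi,S)$ is the set of maps $\chi: V \rightarrow \mathbb{P}$ such that $\chi(\pi^{-1}(1)) \le \chi(\pi^{-1}(2)) \le \cdots \le \chi(\pi^{-1}(n))$ and $\chi(\pi^{-1}(i)) < \chi(\pi^{-1}(i+1))$ whenever $i \in S$. For a permutation $\sigma$ of $[n]$, its descent set is $\mathrm{Des}(\sigma) = \{ i \in [n-1] : \sigma(i) > \sigma(i+1)\}$; here $\pi c \pi^{-1}$ is a permutation of $[n]$. *)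

From mathcomp Require Import all_boot all_fingroup.
Set Implicit Arguments. Unset Strict Implicit. Unset Printing Implicit Defensive.

(* Positions [n] = {1..n} are encoded 0-indexed as 'I_n (shift by one, which
   preserves the order, so descents and the chain conditions are unchanged). *)

(* x = pi^{-1}(i), y = pi^{-1}(i+1), so (pi c pi^{-1})(i) = pi (c x) etc. *)
Definition DesConj (V : finType) (pi : {ffun V -> 'I_#|V|}) (c : {perm V})
  : pred nat :=
  fun i => [exists x : V, exists y : V,
             [&& (pi x : nat) == i, (pi y : nat) == i.+1 &
                 (pi (c y) < pi (c x))%N]].

Definition inA (V : finType) (pi : {ffun V -> 'I_#|V|}) (S : pred nat)
  (chi : V -> nat) : Prop :=
  (forall x, 0 < chi x)%N /\
  forall x y : V, (pi y : nat) = (pi x).+1 ->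
    (chi x <= chi y)%N /\ (S (pi x : nat) -> (chi x < chi y)%N).

Definition nonconstant (V : finType) (chi : V -> nat) : Prop :=
  exists x y : V, chi x <> chi y.

Definition full_cycle (V : finType) (c : {perm V}) : Prop :=
  forall x : V, porbit c x = [set: V].

From mathcomp Require Import all_boot all_order all_fingroup zify.

(* Read off each vertex u the word (chi u, chi (c u), ..., chi (c^(n-1) u)).
   For bijective pi, chi lies in A(pi, Des(pi c pi^-1)) iff consecutive
   vertices x, y (pi y = pi x + 1) have (chi x, pi (c x)) < (chi y, pi (c y))
   lexicographically; by induction on the word length, pi then sorts the
   words, so pi is the lexicographic ranking of the words.  When n is prime
   and chi is nonconstant the n words are pairwise distinct (chi would
   otherwise be invariant under a generator c^d of the cyclic group), so
   this ranking is a bijection and does satisfy the condition.  A constant chi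
   would force pi c pi^-1 to be increasing, i.e. c to fix a vertex. *)

Set Implicit Arguments.
Unset Strict Implicit.
Unset Printing Implicit Defensive.

Import Order.TTheory.

Lemma coprime_periodic_const (T : Type) (f : nat -> T) n d :
  0 < n -> coprime n d -> (forall j, f (j + n) = f j) ->
  (forall j, f (j + d) = f j) -> forall j, f j = f 0.
Proof.
move=> n_gt0 co_nd fn fd.
have fnq q j : f (j + q * n) = f j.
  by elim: q j => [|q IHq] j; rewrite ?mul0n ?addn0 // mulSn addnA IHq.
have fdq q j : f (j + q * d) = f j.
  by elim: q j => [|q IHq] j; rewrite ?mul0n ?addn0 // mulSn addnA IHq.
have [a _] := Bezoutl d n_gt0; rewrite (eqP co_nd) => /dvdnP[q Eq].
have fS j : f j.+1 = f j by rewrite -(fdq a) -addn1 -addnA Eq fnq.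
by elim=> // j <-.
Qed.

Lemma ltxi_rcons (d : Order.disp_t) (T : orderType d) (s t : seqlexi T) a b :
  size s = size t -> (s < t)%O -> (rcons s a < rcons t b :> seqlexi T)%O.
Proof.
elim: s t => [|x s IHs] [|y t] //= [/IHs {}IHs].
by rewrite !ltxi_cons => /andP[-> /implyP st]; apply/implyP => /st /IHs.
Qed.

Lemma card_bij_ltn (V : finType) (q : V -> 'I_#|V|) (k : 'I_#|V|) :
  bijective q -> #|[pred v | q v < k]| = k.
Proof.
case=> g qK gK; have le_k : k <= #|V| by exact: ltnW.
have -> : #|[pred v | q v < k]| = #|[set g (widen_ord le_k j) | j : 'I_k]|.
  apply: eq_card => v; rewrite !inE; apply/idP/imsetP => [lt_vk|[j _ ->]].
    exists (Ordinal lt_vk) => //; rewrite -[v in LHS]qK; congr g.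
    exact: val_inj.
  by rewrite gK /=.
rewrite card_imset ?card_ord // => i j /(can_inj gK)/(congr1 val) /=.
exact: ord_inj.
Qed.

Section Ranking.

Variables (d : Order.disp_t) (T : orderType d) (V : finType) (w : V -> T).

Definition rank u := #|[pred v | (w v < w u)%O]|.

Lemma rank_lt_card u : rank u < #|V|.
Proof.
rewrite /rank -(cardC [pred v | (w v < w u)%O]) -ltn_subLR ?subnn//.
by apply/card_gt0P; exists u; rewrite !inE ltxx.
Qed.

Definition rank_ord u : 'I_#|V| := Ordinal (rank_lt_card u).

Lemma rank_lt u v : (w u < w v)%O -> rank u < rank v.
Proof.
move=> uv; apply: proper_card; rewrite properE; apply/andP; split.
  by apply/subsetP => x; rewrite !inE => /lt_trans; apply.
by apply/subsetPn; exists u; rewrite !inE ?ltxx.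
Qed.

Lemma eq_rank (q : V -> 'I_#|V|) : bijective q ->
  (forall u v, q u < q v -> (w u < w v)%O) -> forall u, q u = rank u :> nat.
Proof.
move=> q_bij q_mono u; rewrite -[in LHS](card_bij_ltn (q u) q_bij).
apply: eq_card => v; rewrite !inE; apply/idP/idP => [/q_mono//|lt_vu].
case: (ltngtP (q v) (q u)) => // [/q_mono|/val_inj/(bij_inj q_bij) Evu].
  by rewrite ltNge (ltW lt_vu).
by rewrite Evu ltxx in lt_vu.
Qed.

Hypothesis w_inj : injective w.

Lemma rank_ltE u v : (rank u < rank v) = (w u < w v)%O.
Proof.
apply/idP/idP; last exact: rank_lt.
case: (ltgtP (w u) (w v)) => // [/rank_lt|/w_inj->]; lia.
Qed.

Lemma rank_inj : injective rank.
Proof.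
move=> u v Euv; apply: w_inj.
by case: (ltgtP (w u) (w v)) => // /rank_lt; lia.
Qed.

End Ranking.

Lemma bij_rel_lt_of_succ (V : finType) (q : V -> 'I_#|V|) (R : rel V) :
  bijective q -> transitive R ->
  (forall x y, q y = (q x).+1 :> nat -> R x y) ->
  forall x y, q x < q y -> R x y.
Proof.
move=> [g qK gK] R_trans R_succ.
suff R_gap m x y : q y = q x + m.+1 :> nat -> R x y.
  by move=> x y lt_xy; apply: (R_gap (q y - q x).-1); lia.
elim: m x y => [|m IHm] x y Ey; first by apply: R_succ; rewrite Ey addn1.
have lt_z : q x + m.+1 < #|V| by have := ltn_ord (q y); lia.
set z := g (Ordinal lt_z); have Ez : q z = q x + m.+1 :> nat by rewrite gK.
by apply: (R_trans z); [apply: IHm | apply: R_succ; rewrite Ey Ez addnS].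
Qed.

Section FullCycle.

Variables (V : finType) (c : {perm V}).
Hypothesis c_full : full_cycle c.

Lemma iter_card_full_cycle u : iter #|V| c u = u.
Proof. by have := iter_porbit c u; rewrite c_full cardsT. Qed.

Lemma full_cycle_iter u x : exists2 i, i < #|V| & x = iter i c u.
Proof.
have := porbit_traject c u x; rewrite c_full cardsT in_setT.
by case/esym/trajectP => i lt_i ->; exists i.
Qed.

End FullCycle.

Section Necklaces.

Variables (V : finType) (c : {perm V}) (chi : V -> nat).

Definition word k u : seqlexi nat := map chi (traject c u k).

Lemma word_cons k u : word k.+1 u = chi u :: word k (c u).
Proof. by rewrite /word trajectS. Qed.

Lemma word_rot k u : iter k.+1 c u = u ->
  word k.+1 (c u) = rcons (word k (c u)) (chi u).
Proof.
by move=> cycle_u; rewrite /word trajectSr map_rcons -iterSr cycle_u.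
Qed.

Lemma size_word k u : size (word k u) = k.
Proof. by rewrite size_map size_traject. Qed.

Lemma nth_word k u j : j < k -> nth 0 (word k u) j = chi (iter j c u).
Proof. by move=> lt_jk; rewrite (nth_map u) ?size_traject ?nth_traject. Qed.

Definition cyc_lt (pi : V -> 'I_#|V|) x y :=
  (chi x < chi y) || (chi x == chi y) && (pi (c x) < pi (c y)).

Definition cyc_sorted (pi : V -> 'I_#|V|) :=
  forall x y, pi y = (pi x).+1 :> nat -> cyc_lt pi x y.

Lemma cyc_lt_trans pi : transitive (cyc_lt pi).
Proof.
move=> y x z; rewrite /cyc_lt.
case/orP=> [lt_xy|/andP[/eqP-> lt_xy]] /orP[lt_yz|/andP[/eqP<- lt_yz]].
- by rewrite (ltn_trans lt_xy lt_yz).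
- by rewrite lt_xy.
- by rewrite lt_yz.
- by rewrite eqxx (ltn_trans lt_xy lt_yz) orbT.
Qed.

Lemma inA_DesConjE (pi : {ffun V -> 'I_#|V|}) : bijective pi ->
  inA pi (DesConj pi c) chi <-> (forall x, 0 < chi x) /\ cyc_sorted pi.
Proof.
move=> pi_bij; have pi_inj := bij_inj pi_bij.
have pi_succ_inj x y x' y' : pi x' = pi x :> nat -> pi y' = pi y :> nat ->
  x' = x /\ y' = y by move=> /val_inj/pi_inj-> /val_inj/pi_inj->.
split=> -[chi_gt0 sorted]; split=> // x y succ_xy.
- have [le_xy des_lt] := sorted x y succ_xy; rewrite /cyc_lt.
  case: (ltngtP (chi x) (chi y)) le_xy => // Exy _ /=.
  case: ltngtP => // [lt_cyx|/val_inj/pi_inj/perm_inj Exy']; last first.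
    by rewrite Exy' in succ_xy; lia.
  have := des_lt; rewrite Exy ltnn; apply.
  by apply/existsP; exists x; apply/existsP; exists y; rewrite succ_xy !eqxx.
- have := sorted x y succ_xy; rewrite /cyc_lt.
  case/orP=> [lt_xy|/andP[/eqP-> lt_cxy]]; first by split=> //; exact: ltnW.
  split=> //; case/existsP=> x' /existsP[y' /and3P[/eqP Ex' /eqP Ey' lt_cyx]].
  have [Ex Ey] := pi_succ_inj x y x' y' Ex' (etrans Ey' (esym succ_xy)).
  subst x' y'.
  by have := ltn_trans lt_cxy lt_cyx; rewrite ltnn.
Qed.

Lemma cyc_sorted_lt pi : bijective pi -> cyc_sorted pi ->
  forall x y, pi x < pi y -> cyc_lt pi x y.
Proof.
by move=> pi_bij; apply: bij_rel_lt_of_succ => //; exact: cyc_lt_trans.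
Qed.

Lemma cyc_sorted_word_le pi : bijective pi -> cyc_sorted pi ->
  forall k x y, pi x < pi y -> (word k x <= word k y)%O.
Proof.
move=> pi_bij /(cyc_sorted_lt pi_bij) sorted; elim=> // k IHk x y /sorted.
rewrite !word_cons lexi_cons /cyc_lt.
case/orP=> [lt_xy|/andP[/eqP-> /IHk->]]; last by rewrite lexx.
apply/andP; split; first exact: ltnW.
by apply/implyP => le_yx; have := leq_trans lt_xy le_yx; rewrite ltnn.
Qed.

Hypotheses (V_prime : prime #|V|) (c_full : full_cycle c).

Lemma word_card_inj : nonconstant chi -> injective (word #|V|).
Proof.
move=> [x0 [y0 chi_x0y0]] u v Euv.
have [d lt_dn Ev] := full_cycle_iter c_full u v.
rewrite Ev; have [-> //|d_gt0] := posnP d; exfalso.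
have chi_d x : chi (iter d c x) = chi x.
  have [j lt_jn ->] := full_cycle_iter c_full u x.
  by rewrite -iterD addnC iterD -Ev -!(@nth_word #|V|) // Euv.
pose f j := chi (iter j c u).
have f_const : forall j, f j = f 0.
  apply: (coprime_periodic_const (n := #|V|) (d := d)) => [|||j].
  - exact: prime_gt0.
  - by rewrite prime_coprime // gtnNdvd.
  - by move=> j; rewrite /f iterD iter_card_full_cycle.
  - by rewrite /f addnC iterD chi_d.
apply: chi_x0y0.
have [i _ ->] := full_cycle_iter c_full u x0.
have [j _ ->] := full_cycle_iter c_full u y0.
by rewrite -/(f i) -/(f j) !f_const.
Qed.

Lemma cyc_sorted_nonconstant pi :
  bijective pi -> cyc_sorted pi -> nonconstant chi.
Proof.
move=> pi_bij sorted; have [g _ gK] := pi_bij.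
have V_gt1 := prime_gt1 V_prime.
have [/existsP[x /existsP[y /eqP]]|/existsPn chi_const] :=
  boolP [exists x, exists y, chi x != chi y]; first by exists x, y.
have chi_eq x y : chi x = chi y.
  by apply/eqP; move: (chi_const x) => /existsPn/(_ y)/negPn.
pose u := g (Ordinal (ltnW V_gt1)); have pi_u : pi u = 0 :> nat by rewrite gK.
have c_u : c u = u.
  have [Eu|neq_u] := eqVneq ((c^-1)%g u) u; first by rewrite -{1}Eu permKV.
  have lt_u : pi u < pi ((c^-1)%g u).
    rewrite pi_u lt0n; apply: contra neq_u; rewrite -pi_u.
    by move=> /eqP/val_inj/(bij_inj pi_bij)->.
  have := cyc_sorted_lt pi_bij sorted lt_u.
  by rewrite /cyc_lt (chi_eq u ((c^-1)%g u)) ltnn eqxx permKV pi_u ltn0.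
pose x := g (Ordinal V_gt1); have [i _ Ex] := full_cycle_iter c_full u x.
have := gK (Ordinal V_gt1); rewrite -/x Ex iter_fix //.
by move=> /(congr1 val); rewrite /= pi_u.
Qed.

Definition necklace_rank : {ffun V -> 'I_#|V|} :=
  [ffun u => rank_ord (word #|V|) u].

Lemma necklace_rankE u : necklace_rank u = rank (word #|V|) u :> nat.
Proof. by rewrite ffunE. Qed.

Hypothesis chi_nonconstant : nonconstant chi.

Lemma necklace_rank_bij : bijective necklace_rank.
Proof.
apply: inj_card_bij; last by rewrite card_ord.
move=> u v Euv; apply: (rank_inj (word_card_inj chi_nonconstant)).
by rewrite -!necklace_rankE Euv.
Qed.

Lemma necklace_rank_sorted : cyc_sorted necklace_rank.
Proof.
move=> x y succ_xy; have w_inj := word_card_inj chi_nonconstant.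
have : (word #|V| x < word #|V| y)%O.
  by rewrite -(rank_ltE w_inj) -!necklace_rankE succ_xy.
have [m Em] : exists m, #|V| = m.+1.
  by exists #|V|.-1; rewrite prednK // prime_gt0.
have cycle_V z : iter m.+1 c z = z by rewrite -Em iter_card_full_cycle.
rewrite /cyc_lt !necklace_rankE Em !word_cons ltxi_cons.
case/andP=> le_xy /implyP lt_tail.
case: ltngtP => // [lt_yx|Exy].
  by have := leq_trans lt_yx le_xy; rewrite ltnn.
apply: rank_lt; rewrite !word_rot //.
by apply: ltxi_rcons; rewrite ?size_word //; apply: lt_tail; rewrite Exy.
Qed.

Lemma cyc_sorted_necklace_rank pi : bijective pi -> cyc_sorted pi ->
  pi =1 necklace_rank.
Proof.
move=> pi_bij sorted u; apply: val_inj; rewrite /= necklace_rankE.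
have w_inj := word_card_inj chi_nonconstant.
apply: (eq_rank pi_bij) => x y lt_xy.
rewrite lt_neqAle (cyc_sorted_word_le pi_bij sorted _ lt_xy) andbT.
by apply: contraTneq lt_xy => /w_inj->; rewrite ltnn.
Qed.

End Necklaces.

Theorem theorem2p1 (V : finType) (c : {perm V}) :
  prime #|V| -> full_cycle c ->
  forall chi : V -> nat,
    ((forall x, 0 < chi x)%N /\ nonconstant chi) <->
    (exists! pi : {ffun V -> 'I_#|V|},
        bijective pi /\ inA pi (DesConj pi c) chi).
Proof.
move=> V_prime c_full chi; split.
- case=> chi_gt0 chi_nc; exists (necklace_rank c chi).
  have rank_bij := necklace_rank_bij V_prime c_full chi_nc.
  split.
    split=> //; apply/(inA_DesConjE _ _ rank_bij); split=> //.
    exact: necklace_rank_sorted.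
  move=> pi [pi_bij /(inA_DesConjE _ _ pi_bij)[_ pi_sorted]]; apply/ffunP => u.
  by rewrite (cyc_sorted_necklace_rank V_prime c_full chi_nc pi_bij pi_sorted).
- case=> pi [[pi_bij /(inA_DesConjE _ _ pi_bij)[chi_gt0 pi_sorted]] _].
  by split=> //; exact: cyc_sorted_nonconstant pi_sorted.
Qed.
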